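(* For every $n\ge0$, $$\sum_{k=0}^n(-1)^kB_{n,k}=2^nE_n,$$ where $B_{n,k}=\sum_{j=0}^{n-k}(-1)^{n-k-j}\binom{n+1}{n-k-j}(2j+1)^n$ and $E_n$ are the Euler numbers defined by $\sum_{n\ge0}E_n\frac{z^n}{n!}=\frac{1}{\cosh z}$. *)

From HB Require Import structures.
From mathcomp Require Import all_boot all_order all_algebra.
Set Implicit Arguments. Unset Strict Implicit. Unset Printing Implicit Defensive.
Import Order.TTheory GRing.Theory Num.Theory.
Local Open Scope ring_scope.

Definition Bnk (n k : nat) : int :=
  \sum_(0 <= j < (n - k)%N.+1)
     (-1) ^+ (n - k - j)%N * ('C(n.+1, (n - k - j)%N))%:R * ((2 * j).+1 ^ n)%:R.

Definition cosh_coef (k : nat) : rat := if odd k then 0 else (k`!%:R)^-1.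

(* E : nat -> int is the sequence of Euler numbers, i.e.
   sum_n E n z^n / n! = 1 / cosh z as formal power series; equivalently
   (by definition of the reciprocal of a formal power series)
   cosh z * (sum_n E n z^n/n!) = 1, i.e. coefficientwise: *)
Definition euler_numbers (E : nat -> int) : Prop :=
  forall n : nat,
    \sum_(0 <= k < n.+1) cosh_coef k * ((E (n - k)%N)%:~R / ((n - k)%N`!)%:R)
    = (n == 0%N)%:R.

From HB Require Import structures.
From mathcomp Require Import all_boot all_order all_algebra.
From mathcomp Require Import zify ring.
Set Implicit Arguments. Unset Strict Implicit. Unset Printing Implicit Defensive.
Import Order.TTheory GRing.Theory Num.Theory.
Local Open Scope ring_scope.

(* Write q(x) = (2x+1)^n.  Exchanging the order of summation shows that
     sum_k (-1)^k B_{n,k} = (-1)^n sum_{j<=n} (-1)^j q(j) H(n-j),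
   where H(r) = sum_{l<=r} C(n+1,l) is a partial row sum of Pascal's triangle.
   These weights are exactly those of the Euler transform
     T_N(q) = sum_{m<=N} (-1)^m (Delta^m q)(0) / 2^(m+1)
   (the Abel sum of sum_j (-1)^j q(j) for polynomials of degree <= N): the
   weighted sum equals 2^(n+1) T_n(q).  For polynomials of degree <= N we
   have T_N(q) + T_N(q(.+1)) = q(0); applied to (2x)^n and expanded
   binomially around 2x+1, this shows that e_m := 2 T_N((2x+1)^m) satisfies
   the recurrence encoding cosh(z) * sum_m e_m z^m/m! = 1 for m <= N.  That
   recurrence determines its solution and forces it to vanish at odd indices,
   so e_n = E_n, and the sign (-1)^n disappears because E_n = 0 for odd n. *)

Section FiniteDifferences.
Variable R : comPzRingType.

Fixpoint fdiff (m : nat) (q : nat -> R) (j : nat) : R :=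
  if m is m'.+1 then fdiff m' q j.+1 - fdiff m' q j else q j.

Lemma eq_fdiff m q1 q2 : q1 =1 q2 -> fdiff m q1 =1 fdiff m q2.
Proof. by move=> eq_q; elim: m => [|m IH] j /=; rewrite ?eq_q ?IH. Qed.

Lemma fdiff_sum m K (c : nat -> R) (f : nat -> nat -> R) j :
  fdiff m (fun x => \sum_(k < K) c k * f k x) j
  = \sum_(k < K) c k * fdiff m (f k) j.
Proof.
elim: m j => [|m IH] j //=.
by rewrite !IH -sumrB; apply: eq_bigr => k _; rewrite mulrBr.
Qed.

Lemma fdiff_shift m q j : fdiff m (fun x => q x.+1) j = fdiff m q j.+1.
Proof. by elim: m j => //= m IH j; rewrite !IH. Qed.

Lemma fdiffSr m q j : fdiff m.+1 q j = fdiff m (fun x => q x.+1 - q x) j.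
Proof.
elim: m j => [|m IH] j //.
by rewrite [RHS]/= -!IH.
Qed.

(* Delta lowers the degree of a polynomial in x, so Delta^M kills (a x + b)^k
   when k < M. *)
Lemma fdiff_pow_affine (a b : R) k M j : (k < M)%N ->
  fdiff M (fun x => (a * x%:R + b) ^+ k) j = 0.
Proof.
elim/ltn_ind: k M j => k IH [|M] j // ltkM.
have lower_degree x : (a * x.+1%:R + b) ^+ k - (a * x%:R + b) ^+ k
    = \sum_(i < k) (a ^+ (k - i) *+ 'C(k, i)) * (a * x%:R + b) ^+ i.
  have -> : a * x.+1%:R + b = a + (a * x%:R + b) by rewrite -addn1 natrD; ring.
  rewrite exprDn big_ord_recr /= subnn expr0 mul1r binn mulr1n addrK.
  by apply: eq_bigr => i _; rewrite mulrnAl.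
rewrite fdiffSr (eq_fdiff _ lower_degree).
rewrite (fdiff_sum _ _ (fun i => a ^+ (k - i) *+ 'C(k, i))
                       (fun i x => (a * x%:R + b) ^+ i)).
by rewrite big1 // => i _; rewrite IH ?mulr0 // (leq_trans (ltn_ord i)).
Qed.

Lemma fdiff_binomial m q j :
  fdiff m q j = (-1) ^+ m * \sum_(i < m.+1) (-1) ^+ i * 'C(m, i)%:R * q (j + i)%N.
Proof.
elim: m j => [|m IH] j.
  by rewrite big_ord_recl big_ord0 /= !expr0 !mul1r addr0 addn0.
rewrite [LHS]/= !IH.
set F1 := \sum_(i < m.+1) _; set F2 := \sum_(i < m.+1) _.
pose G := \sum_(i < m.+1) (-1) ^+ i.+1 * 'C(m, i.+1)%:R * q (j + i.+1)%N.
pose H := \sum_(i < m.+1) (-1) ^+ i.+1 * 'C(m, i)%:R * q (j + i.+1)%N.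
have pascal : \sum_(i < m.+2) (-1) ^+ i * 'C(m.+1, i)%:R * q (j + i)%N
    = q j + (G + H).
  rewrite big_ord_recl /= expr0 bin0 mul1r addn0 mul1r; congr (_ + _).
  rewrite /G /H -big_split /=; apply: eq_bigr => i _.
  by rewrite /bump add1n binS natrD mulrDr mulrDl.
have F2_split : F2 = q j + G.
  rewrite /F2 /G big_ord_recl /= expr0 bin0 mul1r addn0 mul1r; congr (_ + _).
  rewrite [RHS]big_ord_recr /= bin_small // mulr0 mul0r addr0.
  by apply: eq_bigr => i _; rewrite /bump add1n.
have H_F1 : H = - F1.
  rewrite /H /F1 -sumrN; apply: eq_bigr => i _.
  by rewrite exprS addnS addSn; ring.
by rewrite pascal F2_split H_F1 exprS; ring.
Qed.

End FiniteDifferences.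

Definition binom_head (N r : nat) : nat := \sum_(l < r.+1) 'C(N, l).

Lemma binom_headS N r :
  binom_head N.+1 r.+1 = (2 * binom_head N r + 'C(N, r.+1))%N.
Proof.
rewrite /binom_head big_ord_recl bin0.
under eq_bigr => l _ do rewrite /= /bump /= add1n binS.
rewrite big_split /=.
have peel_first : (\sum_(l < r.+2) 'C(N, l) = 1 + \sum_(l < r.+1) 'C(N, l.+1))%N.
  by rewrite big_ord_recl bin0.
have peel_last : (\sum_(l < r.+2) 'C(N, l) = \sum_(l < r.+1) 'C(N, l) + 'C(N, r.+1))%N.
  by rewrite big_ord_recr.
by rewrite addnA -peel_first peel_last addnAC addnn mul2n.
Qed.

Lemma sum_pow2_binom N i : (i <= N)%N ->
  (\sum_(m < N.+1) 2 ^ (N - m) * 'C(m, i) = binom_head N.+1 (N - i))%N.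
Proof.
elim: N => [|N IH] le_iN.
  by move: le_iN; rewrite leqn0 => /eqP ->; rewrite /binom_head !big_ord_recl !big_ord0.
have [lt_iN1 | le_N1i] := ltnP i N.+1; last first.
  have -> : i = N.+1 by apply/eqP; rewrite eqn_leq le_iN le_N1i.
  rewrite subnn /binom_head big_ord_recr /= big1 ?big_ord_recl ?big_ord0 /= ?subnn ?binn //.
  by move=> m _; rewrite bin_small ?muln0.
rewrite big_ord_recr /= subnn expn0 mul1n subSn // binom_headS -IH //.
rewrite big_distrr /= -subSn // bin_sub //.
by congr (_ + _)%N; apply: eq_bigr => m _; rewrite subSn ?expnS ?mulnA // -ltnS.
Qed.

(* The Euler transform of a sequence q, truncated at order N; for q a
   polynomial of degree <= N it is the Abel sum of sum_j (-1)^j q(j). *)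
Section EulerTransform.
Variable F : numFieldType.
Implicit Types (q : nat -> F).

Definition euler_transform N q : F :=
  \sum_(m < N.+1) (-1) ^+ m * fdiff m q 0 / 2 ^+ m.+1.

Lemma eq_euler_transform N q1 q2 :
  q1 =1 q2 -> euler_transform N q1 = euler_transform N q2.
Proof. by move=> eq_q; apply: eq_bigr => m _; rewrite (eq_fdiff _ eq_q). Qed.

Lemma euler_transform_sum N K (c : nat -> F) (f : nat -> nat -> F) :
  euler_transform N (fun x => \sum_(k < K) c k * f k x)
  = \sum_(k < K) c k * euler_transform N (f k).
Proof.
rewrite /euler_transform.
under eq_bigr => m _ do rewrite fdiff_sum mulr_sumr mulr_suml.
rewrite exchange_big /=; apply: eq_bigr => k _.
by rewrite mulr_sumr; apply: eq_bigr => m _; ring.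
Qed.

(* If Delta^(N+1) q = 0 then T_N(q) + T_N(q(.+1)) = q(0): the sum telescopes. *)
Lemma euler_transform_shift N q : (forall j, fdiff N.+1 q j = 0) ->
  euler_transform N q + euler_transform N (fun x => q x.+1) = q 0.
Proof.
move=> fdiff_vanish.
pose t m : F := - ((-1) ^+ m * fdiff m q 0 / 2 ^+ m).
have term m : (-1) ^+ m * fdiff m q 0 / 2 ^+ m.+1
              + (-1) ^+ m * fdiff m (fun x => q x.+1) 0 / 2 ^+ m.+1 = t m.+1 - t m.
  rewrite fdiff_shift /t /= !exprS.
  have two_pow_neq0 : (2 : F) ^+ m != 0 by rewrite expf_neq0 ?pnatr_eq0.
  by field; rewrite ?two_pow_neq0 ?pnatr_eq0.
rewrite /euler_transform -big_split /=.
rewrite (eq_bigr (fun m : 'I_N.+1 => t m.+1 - t m)) => [|m _]; last exact: term.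
rewrite -(big_mkord xpredT (fun m => t m.+1 - t m)) telescope_sumr // /t fdiff_vanish /=.
by rewrite expr0 mul1r divr1 mulr0 mul0r oppr0 sub0r opprK.
Qed.

Lemma euler_transform_weights N q :
  \sum_(j < N.+1) (-1) ^+ j * q j * (binom_head N.+1 (N - j))%:R
  = 2 ^+ N.+1 * euler_transform N q.
Proof.
rewrite /euler_transform !mulr_sumr.
transitivity (\sum_(m < N.+1) \sum_(i < N.+1)
                 ((2 ^ (N - m) * 'C(m, i))%N%:R * ((-1) ^+ i * q i))).
  rewrite exchange_big /=; apply: eq_bigr => j _.
  rewrite -sum_pow2_binom; last by rewrite -ltnS.
  rewrite natr_sum mulr_sumr.
  by apply: eq_bigr => m _; rewrite mulrC.
apply: eq_bigr => m _; have le_mN : (m <= N)%N by rewrite -ltnS.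
have scale (S : F) :
    2 ^+ N.+1 * ((-1) ^+ m * ((-1) ^+ m * S) / 2 ^+ m.+1) = 2 ^+ (N - m) * S.
  have two_pow_neq0 : (2 : F) ^+ m != 0 by rewrite expf_neq0 ?pnatr_eq0.
  have sign_sq : (-1) ^+ m * (-1) ^+ m = 1 :> F by rewrite -exprMn mulrNN mulr1 expr1n.
  rewrite -{1}(subnK le_mN) exprSr exprD (mulrA ((-1) ^+ m)) sign_sq exprS.
  by field; rewrite ?two_pow_neq0 ?pnatr_eq0.
rewrite fdiff_binomial scale.
rewrite (big_ord_widen N.+1 (fun i => (-1) ^+ i * 'C(m, i)%:R * q (0 + i)%N)) //.
rewrite mulr_sumr [RHS]big_mkcond; apply: eq_bigr => i _ /=.
have [lt_im | le_mi] := ltnP; last by rewrite bin_small // muln0 mul0r.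
by rewrite natrM natrX add0n; ring.
Qed.

End EulerTransform.

(* For a sequence x, cosh_conv x n is n! times the coefficient of z^n in
   2 cosh(z) * sum_m x_m z^m/m!; so x is the coefficient sequence of 1/cosh up
   to order N exactly when cosh_reciprocal_upto N x holds. *)
Section CoshReciprocal.
Variable F : numFieldType.
Implicit Types (x : nat -> F).

Definition cosh_conv x n : F :=
  \sum_(k < n.+1) 'C(n, k)%:R * (1 + (-1) ^+ k) * x (n - k)%N.

Definition cosh_reciprocal_upto N x : Prop :=
  forall n, (n <= N)%N -> cosh_conv x n = 2 * (n == 0)%:R.

Lemma cosh_conv_first x n :
  cosh_conv x n
  = 2 * x n + \sum_(k < n) 'C(n, k.+1)%:R * (1 + (-1) ^+ k.+1) * x (n - k.+1)%N.
Proof. by rewrite /cosh_conv big_ord_recl /= bin0 subn0 expr0 mul1r. Qed.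

(* The recurrence determines its solution (the leading coefficient is 2). *)
Lemma cosh_reciprocal_unique N x y :
  cosh_reciprocal_upto N x -> cosh_reciprocal_upto N y ->
  forall n, (n <= N)%N -> x n = y n.
Proof.
move=> recx recy; elim/ltn_ind=> n IH le_nN.
have := recx n le_nN; rewrite -(recy n le_nN) !cosh_conv_first.
have -> : \sum_(k < n) 'C(n, k.+1)%:R * (1 + (-1) ^+ k.+1) * x (n - k.+1)%N
        = \sum_(k < n) 'C(n, k.+1)%:R * (1 + (-1) ^+ k.+1) * y (n - k.+1)%N.
  by apply: eq_bigr => k _; have lt_kn := ltn_ord k; rewrite IH //; lia.
have two_neq0 : (2 : F) != 0 by rewrite pnatr_eq0.
by move/addIr/(mulfI two_neq0).
Qed.

(* Since cosh is even, solutions of the recurrence vanish at odd indices. *)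
Lemma cosh_reciprocal_odd N x :
  cosh_reciprocal_upto N x -> forall n, (n <= N)%N -> odd n -> x n = 0.
Proof.
move=> recx; elim/ltn_ind=> n IH le_nN odd_n.
have two_neq0 : (2 : F) != 0 by rewrite pnatr_eq0.
have := recx n le_nN; rewrite cosh_conv_first big1 ?addr0 => [|k _].
  case: n odd_n {IH le_nN} => // n _ eq2x.
  by apply: (mulfI two_neq0); rewrite eq2x mulr0.
have [odd_k1 | even_k1] := boolP (odd k.+1).
  by rewrite -signr_odd odd_k1 expr1 subrr mulr0 mul0r.
by rewrite IH ?mulr0 //; move: even_k1 odd_n (ltn_ord k); rewrite -!oddS /=; lia.
Qed.

End CoshReciprocal.

Section EulerTransformReciprocal.
Variable F : numFieldType.

Definition odd_power_transform N n : F :=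
  2 * euler_transform N (fun x => (2 * x%:R + 1) ^+ n).

Lemma odd_power_transform_reciprocal N :
  cosh_reciprocal_upto N (odd_power_transform N).
Proof.
move=> n le_nN.
pose odd_pow k x : F := (2 * x%:R + 1) ^+ (n - k).
have even_pow_down x : (2 * x%:R + 0 : F) ^+ n
    = \sum_(k < n.+1) ((-1) ^+ k *+ 'C(n, k)) * odd_pow k x.
  rewrite (_ : 2 * x%:R + 0 = (2 * x%:R + 1) + (-1)); last by rewrite addr0 addrK.
  rewrite exprDn; apply: eq_bigr => k _.
  by rewrite /odd_pow [RHS]mulrnAl; congr (_ *+ _); rewrite mulrC.
have even_pow_up x : (2 * x.+1%:R + 0 : F) ^+ n
    = \sum_(k < n.+1) (1 *+ 'C(n, k)) * odd_pow k x.
  rewrite (_ : 2 * x.+1%:R + 0 = (2 * x%:R + 1) + 1); last by rewrite -addn1 natrD; ring.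
  rewrite exprDn; apply: eq_bigr => k _.
  by rewrite /odd_pow expr1n mulr1 [RHS]mulrnAl mul1r.
have := @euler_transform_shift F N (fun x => (2 * x%:R + 0) ^+ n)
          (fun j => fdiff_pow_affine 2 0 j (le_nN : (n < N.+1)%N)) => /=.
rewrite (eq_euler_transform _ even_pow_down) (eq_euler_transform _ even_pow_up).
rewrite (euler_transform_sum N n.+1 (fun k => (-1) ^+ k *+ 'C(n, k)) odd_pow).
rewrite (euler_transform_sum N n.+1 (fun k => 'C(n, k)%:R) odd_pow).
rewrite mulr0 addr0 expr0n /= => shift_eq.
rewrite /cosh_conv -shift_eq mulrDr !mulr_sumr -big_split /=; apply: eq_bigr => k _.
by rewrite /odd_power_transform -(mulr_natl ((-1) ^+ k) 'C(n, k)); ring.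
Qed.

End EulerTransformReciprocal.

(* The Euler numbers solve the same recurrence: multiply the defining
   identity by 2 n!. *)
Lemma euler_numbers_reciprocal (E : nat -> int) N : euler_numbers E ->
  cosh_reciprocal_upto N (fun n => (E n)%:~R : rat).
Proof.
move=> hE n _; have := hE n; rewrite big_mkord => coef_eq.
have -> : (n == 0)%:R = (n == 0)%:R * (n`!)%:R :> rat.
  by case: n {coef_eq} => [|n] /=; rewrite ?mulr1 ?mul0r.
rewrite -coef_eq mulr_suml mulr_sumr; apply: eq_bigr => k _.
have le_kn : (k <= n)%N by rewrite -ltnS.
have fact_neq0 m : (m`!%:R : rat) != 0 by rewrite pnatr_eq0 -lt0n fact_gt0.
rewrite /cosh_coef -signr_odd; case: (odd k) => /=.
  by rewrite expr1 subrr mulr0 !mul0r mulr0.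
rewrite expr0 -(bin_fact le_kn) !natrM; field.
by rewrite !fact_neq0.
Qed.

Lemma sign_split (R : pzRingType) k j n : (k + j <= n)%N ->
  (-1) ^+ k * (-1) ^+ (n - k - j) = (-1) ^+ n * (-1) ^+ j :> R.
Proof.
move=> le_kjn; rewrite -exprD (_ : (k + (n - k - j) = n - j)%N); last by lia.
have le_jn : (j <= n)%N by lia.
rewrite -[in RHS](subnK le_jn) exprD -mulrA.
by rewrite -exprD addnn -mul2n exprM sqrrN !expr1n mulr1.
Qed.

Lemma sum_triangle_swap (V : nmodType) n (f : nat -> nat -> V) :
  \sum_(k < n.+1) \sum_(j < (n - k).+1) f k j
  = \sum_(j < n.+1) \sum_(k < (n - j).+1) f k j.
Proof.
have square (g : nat -> nat -> V) : \sum_(k < n.+1) \sum_(j < (n - k).+1) g k j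
    = \sum_(k < n.+1) \sum_(j < n.+1) (if (k + j <= n)%N then g k j else 0).
  apply: eq_bigr => k _; rewrite (big_ord_widen n.+1 (g k)) ?ltnS ?leq_subr //.
  by rewrite big_mkcond; apply: eq_bigr => j _; rewrite ltnS leq_subRL // -ltnS.
rewrite square (square (fun j k => f k j)) exchange_big /=.
by apply: eq_bigr => j _; apply: eq_bigr => k _; rewrite addnC.
Qed.

Lemma alternating_Bnk_sum n :
  \sum_(0 <= k < n.+1) (-1) ^+ k * Bnk n k
  = (-1) ^+ n * \sum_(j < n.+1)
        (-1) ^+ j * ((2 * j).+1 ^ n)%:R * (binom_head n.+1 (n - j))%:R.
Proof.
pose term k j : int :=
  (-1) ^+ n * ((-1) ^+ j * ((2 * j).+1 ^ n)%:R) * 'C(n.+1, n - k - j)%:R.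
rewrite big_mkord.
transitivity (\sum_(k < n.+1) \sum_(j < (n - k).+1) term k j).
  apply: eq_bigr => k _; rewrite /Bnk big_mkord mulr_sumr; apply: eq_bigr => j _.
  have le_kjn : (k + j <= n)%N by have := ltn_ord j; have := ltn_ord k; lia.
  by rewrite /term !mulrA sign_split //; ring.
rewrite sum_triangle_swap mulr_sumr; apply: eq_bigr => j _.
rewrite /term -mulr_sumr -[LHS]mulrA; congr (_ * _); congr (_ * _).
rewrite /binom_head natr_sum (reindex_inj rev_ord_inj) /=; apply: eq_bigr => k _.
by have := ltn_ord k; rewrite subSS => lt_k; congr (_%:R); congr 'C(_, _); lia.
Qed.

Theorem corollary6p2 (E : nat -> int) (hE : euler_numbers E) (n : nat) :
  \sum_(0 <= k < n.+1) (-1) ^+ k * Bnk n k = (2 ^ n)%:R * E n.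
Proof.
have recE := euler_numbers_reciprocal (N := n) hE.
have E_transform : odd_power_transform rat n n = (E n)%:~R.
  exact: (cosh_reciprocal_unique (odd_power_transform_reciprocal rat (N := n)) recE (leqnn n)).
have E_sign : (-1) ^+ n * (E n)%:~R = (E n)%:~R :> rat.
  have [odd_n | even_n] := boolP (odd n); last by rewrite -signr_odd (negbTE even_n) mul1r.
  by move: (cosh_reciprocal_odd recE (leqnn n) odd_n) => /= ->; rewrite mulr0.
have weighted_sum : \sum_(j < n.+1) (-1) ^+ j * ((2 * j).+1 ^ n)%:R
    * (binom_head n.+1 (n - j))%:R = (2 ^ n)%:R * (E n)%:~R :> rat.
  under eq_bigr => j _ do rewrite natrX -natr1 natrM.
  rewrite (euler_transform_weights n (fun x => (2 * x%:R + 1) ^+ n)) -E_transform.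
  by rewrite /odd_power_transform natrX exprS; ring.
apply: (@intr_inj rat); rewrite alternating_Bnk_sum rmorphM rmorph_sign rmorph_sum /=.
under eq_bigr => j _ do rewrite !rmorphM rmorph_sign !rmorph_nat.
by rewrite weighted_sum mulrCA E_sign rmorphM rmorph_nat.
Qed.
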